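(* Let $\mathbb{K}\in\{\mathbb{R},\mathbb{C}\}$, $\mathbf{R}_U\in\mathbb{K}^{n\times n}$ self-adjoint positive definite, $U:=\mathbb{K}^n$ with $\langle\mathbf{x},\mathbf{y}\rangle_U:=\langle\mathbf{R}_U\mathbf{x},\mathbf{y}\rangle$, norm $\|\cdot\|_U$, and dual norm $\|\mathbf{y}\|_{U'}:=\langle\mathbf{y},\mathbf{R}_U^{-1}\mathbf{y}\rangle^{1/2}$. Fix $\mu$, $\mathbf{A}(\mu)\in\mathbb{K}^{n\times n}$, $\mathbf{b}(\mu)\in\mathbb{K}^n$, $\mathbf{u}(\mu)$ with $\mathbf{A}(\mu)\mathbf{u}(\mu)=\mathbf{b}(\mu)$, a subspace $U_r\subseteq U$ and $\mathbf{\Theta}\in\mathbb{K}^{k\times n}$. Define $\|\mathbf{y}\|_{U_r'}:=\max_{\mathbf{w}\in U_r\setminus\{\mathbf{0}\}}|\langle\mathbf{y},\mathbf{w}\rangle|/\|\mathbf{w}\|_U$ and $\|\mathbf{y}\|_{U_r'}^{\mathbf{\Theta}}:=\max_{\mathbf{x}\in U_r\setminus\{\mathbf{0}\}}|\langle\mathbf{\Theta}\mathbf{R}_U^{-1}\mathbf{y},\mathbf{\Theta}\mathbf{x}\rangle|/\|\mathbf{\Theta}\mathbf{x}\|$; $\alpha_r(\mu):=\min_{\mathbf{x}\in U_r\setminus\{\mathbf{0}\}}\|\mathbf{A}(\mu)\mathbf{x}\|_{U_r'}/\|\mathbf{x}\|_U$, $\beta_r(\mu):=\max_{\mathbf{x}\in(\mathrm{span}\{\mathbf{u}(\mu)\}+U_r)\setminus\{\mathbf{0}\}}\|\mathbf{A}(\mu)\mathbf{x}\|_{U_r'}/\|\mathbf{x}\|_U$,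 $\beta(\mu):=\max_{\mathbf{x}\in U\setminus\{\mathbf{0}\}}\|\mathbf{A}(\mu)\mathbf{x}\|_{U'}/\|\mathbf{x}\|_U$; $\alpha_r^{\mathbf{\Theta}}(\mu)$ and $\beta_r^{\mathbf{\Theta}}(\mu)$ defined as $\alpha_r(\mu),\beta_r(\mu)$ with $\|\cdot\|_{U_r'}$ replaced by $\|\cdot\|_{U_r'}^{\mathbf{\Theta}}$ (denominators still $\|\mathbf{x}\|_U$); and $$a_r(\mu):=\max_{\mathbf{w}\in U_r\setminus\{\mathbf{0}\}}\frac{\|\mathbf{A}(\mu)\mathbf{w}\|_{U'}}{\|\mathbf{A}(\mu)\mathbf{w}\|_{U_r'}}.$$ Let $Y_r(\mu):=U_r+\mathrm{span}\{\mathbf{R}_U^{-1}(\mathbf{b}(\mu)-\mathbf{A}(\mu)\mathbf{x}):\mathbf{x}\in U_r\}$. If for some $\varepsilon\in[0,1)$, $|\langle\mathbf{x},\mathbf{y}\rangle_U-\langle\mathbf{\Theta}\mathbf{x},\mathbf{\Theta}\mathbf{y}\rangle|\le\varepsilon\|\mathbf{x}\|_U\|\mathbf{y}\|_U$ for all $\mathbf{x},\mathbf{y}\in Y_r(\mu)$, then $$\alpha_r^{\mathbf{\Theta}}(\mu)\ge\frac{1}{\sqrt{1+\varepsilon}}(1-\varepsilon a_r(\mu))\alpha_r(\mu),\qquad\beta_r^{\mathbf{\Theta}}(\mu)\le\frac{1}{\sqrt{1-\varepsilon}}(\beta_r(\mu)+\varepsilon\beta(\mu)).$$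
   Context: $\langle\mathbf{x},\mathbf{y}\rangle=\mathbf{x}^{\mathrm{H}}\mathbf{y}$ is the canonical inner product and $\|\cdot\|$ the Euclidean norm. *)

From HB Require Import structures.
From mathcomp Require Import all_boot all_order all_algebra.
From mathcomp Require Import boolp classical_sets reals.
From mathcomp.real_closed Require Import complex.

Set Implicit Arguments.
Unset Strict Implicit.
Unset Printing Implicit Defensive.

Import Order.TTheory GRing.Theory Num.Theory.
Local Open Scope ring_scope.
Local Open Scope classical_set_scope.

Inductive scalar_kind := RealK | ComplexK.

Definition Kfield (R : realType) (c : scalar_kind) : numFieldType :=
  match c with RealK => R | ComplexK => (R[i] : numFieldType) end.

Definition Kconj (R : realType) (c : scalar_kind) : Kfield R c -> Kfield R c :=
  match c with
  | RealK => fun x => x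
  | ComplexK => fun x : R[i] => conjc x
  end.

Definition Kabs (R : realType) (c : scalar_kind) : Kfield R c -> R :=
  match c with
  | RealK => fun x : R => `|x|
  | ComplexK => fun x : R[i] => ComplexField.Normc.normc x
  end.

Definition Kre (R : realType) (c : scalar_kind) : Kfield R c -> R :=
  match c with
  | RealK => fun x : R => x
  | ComplexK => fun x : R[i] => complex.Re x
  end.

Section Defs.
Variables (R : realType) (c : scalar_kind).
Local Notation K := (Kfield R c).
Local Notation conj := (@Kconj R c).

Definition adjmx m n (A : 'M[K]_(m, n)) : 'M[K]_(n, m) := (map_mx conj A)^T.

Definition dotp n (x y : 'cV[K]_n) : K := \sum_(i < n) conj (x i 0) * y i 0.

Definition enorm n (x : 'cV[K]_n) : R := Num.sqrt (@Kre R c (dotp x x)).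

Definition spd n (RU : 'M[K]_n) : Prop :=
  adjmx RU = RU /\ forall x : 'cV[K]_n, x != 0 -> 0 < dotp x (RU *m x).

Variables (n : nat) (RU : 'M[K]_n).

Definition dotU (x y : 'cV[K]_n) : K := dotp (RU *m x) y.
Definition normU (x : 'cV[K]_n) : R := Num.sqrt (@Kre R c (dotU x x)).

Definition dualU (y : 'cV[K]_n) : R := Num.sqrt (@Kre R c (dotp y (invmx RU *m y))).

Definition sspan (S : set 'cV[K]_n) : set 'cV[K]_n :=
  [set v | exists (s : seq 'cV[K]_n) (a : seq K),
      (forall x, x \in s -> S x) /\ v = \sum_(i < size s) a`_i *: s`_i].

Definition sumset (S T : set 'cV[K]_n) : set 'cV[K]_n :=
  [set x + y | x in S & y in T].

Definition vsset (V : {vspace 'cV[K]_n}) : set 'cV[K]_n := [set x | x \in V].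

Definition maxr (S : set 'cV[K]_n) (f : 'cV[K]_n -> R) : R :=
  sup [set f x | x in [set x | S x /\ x != 0]].
Definition minr (S : set 'cV[K]_n) (f : 'cV[K]_n -> R) : R :=
  inf [set f x | x in [set x | S x /\ x != 0]].

Variables (Ur : {vspace 'cV[K]_n}) (k : nat) (Theta : 'M[K]_(k, n)).

Definition dualUr (y : 'cV[K]_n) : R :=
  maxr (vsset Ur) (fun w => @Kabs R c (dotp y w) / normU w).

Definition dualUrTh (y : 'cV[K]_n) : R :=
  maxr (vsset Ur)
    (fun x => @Kabs R c (dotp (Theta *m (invmx RU *m y)) (Theta *m x)) / enorm (Theta *m x)).

Variables (A : 'M[K]_n) (b u : 'cV[K]_n).

Definition alpha_r : R := minr (vsset Ur) (fun x => dualUr (A *m x) / normU x).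
Definition beta_r : R :=
  maxr (sumset (sspan [set u]) (vsset Ur)) (fun x => dualUr (A *m x) / normU x).
Definition beta : R := maxr setT (fun x => dualU (A *m x) / normU x).
Definition alpha_rTh : R := minr (vsset Ur) (fun x => dualUrTh (A *m x) / normU x).
Definition beta_rTh : R :=
  maxr (sumset (sspan [set u]) (vsset Ur)) (fun x => dualUrTh (A *m x) / normU x).
Definition a_r : R :=
  maxr (vsset Ur) (fun w => dualU (A *m w) / dualUr (A *m w)).

Definition Y_r : set 'cV[K]_n :=
  sumset (vsset Ur) (sspan [set invmx RU *m (b - A *m x) | x in vsset Ur]).

End Defs.

(* Because A u = b, the vector R_U^-1 A x lies in Y_r for every x in span{u} + U_r,
   so the embedding hypothesis applies to the pairs (R_U^-1 A x, w), w in U_r: it gives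
   |<Theta R_U^-1 y, Theta w> - <y, w>| <= eps ||y||_U' ||w||_U for y = A x, and
   sqrt(1 - eps) ||w||_U <= ||Theta w|| <= sqrt(1 + eps) ||w||_U.
   Dividing and maximising over w squeezes the sketched dual norm:
     ||y||^Theta_Ur' <= (||y||_Ur' + eps ||y||_U') / sqrt(1 - eps),
     ||y||_Ur' <= sqrt(1 + eps) ||y||^Theta_Ur' + eps ||y||_U'.
   The first bound gives the one on beta_r^Theta; the second, combined with
   ||A x||_U' <= a_r ||A x||_Ur', gives the one on alpha_r^Theta.
   Maxima are modelled by [sup], which is 0 on unbounded sets, so every maximum
   used is shown finite through ||A x||_U' <= C ||x||_U. *)

From HB Require Import structures.
From mathcomp Require Import all_boot all_order all_algebra.
From mathcomp Require Import boolp classical_sets reals.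
From mathcomp.real_closed Require Import complex.
From mathcomp Require Import ring lra.
Import Order.TTheory GRing.Theory Num.Theory.
Local Open Scope ring_scope.
Local Open Scope classical_set_scope.
Set Implicit Arguments.
Unset Strict Implicit.
Unset Printing Implicit Defensive.

Section Scalars.
Variables (R : realType) (c : scalar_kind).
Local Notation K := (Kfield R c).
Local Notation conj := (@Kconj R c).
Local Notation Kre := (@Kre R c).

Lemma Kconj_is_zmod_morphism : zmod_morphism conj.
Proof. by case: c => x y //=; rewrite rmorphB. Qed.
HB.instance Definition _ :=
  GRing.isZmodMorphism.Build K K conj Kconj_is_zmod_morphism.

Lemma Kconj_is_monoid_morphism : monoid_morphism conj.
Proof.
rewrite /monoid_morphism; case: c; split=> [|x y] //=; [exact: conjc1 | exact: rmorphM].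
Qed.
HB.instance Definition _ :=
  GRing.isMonoidMorphism.Build K K conj Kconj_is_monoid_morphism.

Lemma Kre_is_zmod_morphism : zmod_morphism Kre.
Proof. by case: c => x y //=; rewrite raddfB. Qed.
HB.instance Definition _ :=
  GRing.isZmodMorphism.Build K R Kre Kre_is_zmod_morphism.

Definition Kreal : R -> K :=
  match c return R -> Kfield R c with
  | RealK => id
  | ComplexK => fun r => (r%:C)%C
  end.

End Scalars.

Section ScalarLemmas.
Variables (R : realType) (c : scalar_kind).
Local Notation conj := (@Kconj R c).
Local Notation Kre := (@Kre R c).
Local Notation Kabs := (@Kabs R c).
Local Notation Kreal := (@Kreal R c).

Lemma KconjK : involutive conj.
Proof. by case: c => x //=; rewrite conjcK. Qed.

Lemma KrealM a b : Kreal (a * b) = Kreal a * Kreal b.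
Proof. by case: c => //=; rewrite rmorphM. Qed.

Lemma Kre_Kreal r : Kre (Kreal r) = r.
Proof. by case: c. Qed.

Lemma Kre_mulKreal r x : Kre (Kreal r * x) = r * Kre x.
Proof. by case: c x => //= -[a b] /=; simpc. Qed.

Lemma Kre_conj x : Kre (conj x) = Kre x.
Proof. by case: c x => // -[a b]. Qed.

Lemma mul_Kconj_self x : conj x * x = Kreal (Kabs x ^+ 2).
Proof.
case: c x => /= [x|[a b]]; first by rewrite real_normK ?num_real // expr2.
rewrite sqr_sqrtr ?addr_ge0 ?sqr_ge0 //; simpc.
by apply/eqP; rewrite eq_complex /= [a * b]mulrC subrr !expr2 !eqxx.
Qed.

Lemma Kabs_ge0 x : 0 <= Kabs x.
Proof. by case: c x => /= [x|[a b]] //=; rewrite sqrtr_ge0. Qed.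

Lemma KabsM x y : Kabs (x * y) = Kabs x * Kabs y.
Proof. by case: c x y => /= x y; [exact: normrM | exact: ComplexField.Normc.normcM]. Qed.

Lemma Kabs_conj x : Kabs (conj x) = Kabs x.
Proof. by case: c x => /= [x|[a b]] //=; rewrite sqrrN. Qed.

Lemma ler_KabsD x y : Kabs (x + y) <= Kabs x + Kabs y.
Proof. by case: c x y => /= x y; [exact: ler_normD | exact: le_normcD]. Qed.

Lemma KabsN x : Kabs (- x) = Kabs x.
Proof. by case: c x => /= x; [exact: normrN | exact: normcN]. Qed.

Lemma ler_KabsB x y : Kabs x <= Kabs y + Kabs (x - y).
Proof. by rewrite -{1}(subrKC y x) ler_KabsD. Qed.

Lemma Kre_le_Kabs x : Kre x <= Kabs x.
Proof.
case: c x => /= [x|[a b]] /=; first exact: ler_norm.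
apply: le_trans (ler_norm a) _; rewrite -sqrtr_sqr ler_wsqrtr //.
by rewrite lerDl sqr_ge0.
Qed.

Lemma normr_Kre_le_Kabs x : `|Kre x| <= Kabs x.
Proof. by rewrite ler_norml Kre_le_Kabs andbT lerNl -raddfN /= -KabsN Kre_le_Kabs. Qed.

Lemma Kabs_Kreal r : Kabs (Kreal r) = `|r|.
Proof. by case: c => //=; rewrite expr0n /= addr0 sqrtr_sqr. Qed.

Lemma Kre_gt0 x : 0 < x -> 0 < Kre x.
Proof. by case: c x => //= x; rewrite ltcE => /andP[]. Qed.

End ScalarLemmas.

Section InnerProduct.
Variables (R : realType) (c : scalar_kind) (n : nat).
Local Notation K := (Kfield R c).
Local Notation conj := (@Kconj R c).
Local Notation Kre := (@Kre R c).
Local Notation Kabs := (@Kabs R c).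
Implicit Types x y z : 'cV[K]_n.

Lemma dotpDr x y z : dotp x (y + z) = dotp x y + dotp x z.
Proof. by rewrite /dotp -big_split; apply: eq_bigr => i _; rewrite !mxE mulrDr. Qed.

Lemma dotpZr x y a : dotp x (a *: y) = a * dotp x y.
Proof. by rewrite /dotp mulr_sumr; apply: eq_bigr => i _; rewrite !mxE mulrCA. Qed.

Lemma dotpC x y : dotp x y = conj (dotp y x).
Proof.
rewrite /dotp rmorph_sum; apply: eq_bigr => i _.
by rewrite rmorphM /= KconjK mulrC.
Qed.

Lemma dotpDl x y z : dotp (x + y) z = dotp x z + dotp y z.
Proof. by rewrite dotpC dotpDr rmorphD /= -!dotpC. Qed.

Lemma dotpZl x y a : dotp (a *: x) y = conj a * dotp x y.
Proof. by rewrite dotpC dotpZr rmorphM /= -!dotpC. Qed.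

Lemma dotp0r x : dotp x 0 = 0.
Proof. by rewrite /dotp big1 // => i _; rewrite mxE mulr0. Qed.

Lemma dotp0l x : dotp 0 x = 0.
Proof. by rewrite dotpC dotp0r rmorph0. Qed.

Lemma dotp_adjmx (M : 'M[K]_n) x y : dotp x (M *m y) = dotp (adjmx M *m x) y.
Proof.
rewrite /dotp /adjmx.
under eq_bigr => i _ do rewrite mxE mulr_sumr.
under [RHS]eq_bigr => j _ do rewrite mxE rmorph_sum mulr_suml.
rewrite exchange_big /=; apply: eq_bigr => j _; apply: eq_bigr => i _.
by rewrite !mxE rmorphM /= KconjK mulrCA mulrA.
Qed.

Lemma Kre_dotpp x : Kre (dotp x x) = \sum_i Kabs (x i 0) ^+ 2.
Proof.
by rewrite /dotp raddf_sum; apply: eq_bigr => i _; rewrite /= mul_Kconj_self Kre_Kreal.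
Qed.

Lemma Kre_dotpp_ge0 x : 0 <= Kre (dotp x x).
Proof. by rewrite Kre_dotpp sumr_ge0 // => i _; rewrite sqr_ge0. Qed.

End InnerProduct.

Lemma le_mul_of_quadratic_ge0 (R : realFieldType) (P Q Z : R) : 0 <= Z -> 0 <= Q ->
  (forall t, 0 <= P - 2 * t * Z + t ^+ 2 * Z * Q) -> Z <= P * Q.
Proof.
move=> Z0 Q0 hquad.
have P0 : 0 <= P by have := hquad 0; rewrite mulr0 !mul0r expr0n /= !mul0r; lra.
have [Qgt0|] := ltP 0 Q.
  have := hquad Q^-1.
  have -> : Q^-1 ^+ 2 * Z * Q = Q^-1 * Z by field; rewrite gt_eqF.
  by move=> h; rewrite -ler_pdivrMr // mulrC; lra.
rewrite le_eqVlt ltNge Q0 orbF => /eqP Q00; rewrite Q00 mulr0.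
rewrite leNgt; apply/negP => Zgt0.
have := hquad ((P + 1) / Z); rewrite Q00 mulr0 addr0 -mulrA divfK ?gt_eqF //; lra.
Qed.

Section CauchySchwarz.
Variables (R : realType) (c : scalar_kind) (n : nat) (H : 'M[Kfield R c]_n).
Local Notation conj := (@Kconj R c).
Local Notation Kre := (@Kre R c).
Local Notation Kabs := (@Kabs R c).
Local Notation Kreal := (@Kreal R c).
Hypothesis H_herm : adjmx H = H.
Hypothesis H_psd : forall x, 0 <= Kre (dotp x (H *m x)).

Lemma dotp_herm x y : dotp x (H *m y) = conj (dotp y (H *m x)).
Proof. by rewrite dotp_adjmx H_herm dotpC. Qed.

Lemma herm_CauchySchwarz_sqr x y :
  Kabs (dotp x (H *m y)) ^+ 2 <= Kre (dotp x (H *m x)) * Kre (dotp y (H *m y)).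
Proof.
set z := dotp x (H *m y).
apply: le_mul_of_quadratic_ge0; [exact: sqr_ge0 | exact: H_psd | move=> t].
(* expand the nonnegative form at x - t <x, H y>^* y *)
set a := Kreal (- t) * conj z.
have := H_psd (x + a *: y).
rewrite mulmxDr -scalemxAr dotpDl !dotpDr !dotpZl !dotpZr -/z.
rewrite [dotp y (H *m x)]dotp_herm -/z !raddfD /=.
have az : a * z = Kreal (- (t * Kabs z ^+ 2)).
  by rewrite /a -mulrA mul_Kconj_self -KrealM mulNr.
have aay : conj a * (a * dotp y (H *m y)) = Kreal (t ^+ 2 * Kabs z ^+ 2) * dotp y (H *m y).
  rewrite mulrA mul_Kconj_self /a KabsM Kabs_conj Kabs_Kreal normrN.
  by rewrite exprMn real_normK ?num_real.
rewrite az aay -rmorphM /= az Kre_conj Kre_Kreal Kre_mulKreal; lra.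
Qed.

Lemma herm_CauchySchwarz x y :
  Kabs (dotp x (H *m y))
  <= Num.sqrt (Kre (dotp x (H *m x))) * Num.sqrt (Kre (dotp y (H *m y))).
Proof.
rewrite -sqrtrM ?H_psd // -(ger0_norm (Kabs_ge0 _)) -sqrtr_sqr.
exact/ler_wsqrtr/herm_CauchySchwarz_sqr.
Qed.

End CauchySchwarz.

Section Euclidean.
Variables (R : realType) (c : scalar_kind) (n : nat).
Local Notation K := (Kfield R c).
Local Notation conj := (@Kconj R c).
Local Notation Kre := (@Kre R c).
Local Notation Kabs := (@Kabs R c).
Implicit Types x y : 'cV[K]_n.

Lemma adjmx1 : adjmx (1%:M : 'M[K]_n) = 1%:M.
Proof. by rewrite /adjmx map_mx1 trmx1. Qed.

Let dotp_mul1mx_ge0 x : 0 <= Kre (dotp x (1%:M *m x)).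
Proof. by rewrite mul1mx Kre_dotpp_ge0. Qed.

Lemma CauchySchwarz_sqr x y : Kabs (dotp x y) ^+ 2 <= Kre (dotp x x) * Kre (dotp y y).
Proof. by have := herm_CauchySchwarz_sqr adjmx1 dotp_mul1mx_ge0 x y; rewrite !mul1mx. Qed.

Lemma CauchySchwarz x y : Kabs (dotp x y) <= enorm x * enorm y.
Proof. by have := herm_CauchySchwarz adjmx1 dotp_mul1mx_ge0 x y; rewrite !mul1mx. Qed.

Lemma enorm_ge0 x : 0 <= enorm x.
Proof. exact: sqrtr_ge0. Qed.

Lemma enorm_sqr x : enorm x ^+ 2 = Kre (dotp x x).
Proof. by rewrite sqr_sqrtr ?Kre_dotpp_ge0. Qed.

Lemma dotpp_mulmx_bounded m (M : 'M[K]_(m, n)) :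
  exists2 F, 0 <= F & forall x, Kre (dotp (M *m x) (M *m x)) <= F * Kre (dotp x x).
Proof.
pose row_conj i : 'cV[K]_n := \col_j conj (M i j).
exists (\sum_i Kre (dotp (row_conj i) (row_conj i))).
  by apply: sumr_ge0 => i _; exact: Kre_dotpp_ge0.
move=> x; rewrite Kre_dotpp mulr_suml; apply: ler_sum => i _.
have -> : (M *m x) i 0 = dotp (row_conj i) x.
  by rewrite /dotp mxE; apply: eq_bigr => j _; rewrite mxE KconjK.
exact: CauchySchwarz_sqr.
Qed.

Lemma Kre_dotp_mulmx_bounded (M : 'M[K]_n) :
  exists2 D, 0 <= D & forall x, Kre (dotp x (M *m x)) <= D * Kre (dotp x x).
Proof.
have [F F0 hF] := dotpp_mulmx_bounded M.
exists (Num.sqrt F); first exact: sqrtr_ge0.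
move=> x; apply: le_trans (Kre_le_Kabs _) _; apply: le_trans (CauchySchwarz _ _) _.
rewrite -enorm_sqr expr2 mulrA [X in _ <= X]mulrC ler_wpM2l ?enorm_ge0 //.
by rewrite /enorm -sqrtrM // ler_wsqrtr.
Qed.

End Euclidean.

Section UGeometry.
Variables (R : realType) (c : scalar_kind) (n : nat) (RU : 'M[Kfield R c]_n).
Local Notation K := (Kfield R c).
Local Notation Kre := (@Kre R c).
Local Notation Kabs := (@Kabs R c).
Hypothesis RU_spd : spd RU.
Implicit Types x y w : 'cV[K]_n.

Lemma spd_psd x : 0 <= Kre (dotp x (RU *m x)).
Proof.
have [->|/RU_spd.2/Kre_gt0/ltW //] := eqVneq x 0.
by rewrite dotp0l raddf0.
Qed.

Lemma dotUE x y : dotU RU x y = dotp x (RU *m y).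
Proof. by rewrite /dotU dotp_adjmx RU_spd.1. Qed.

Lemma normUE x : normU RU x = Num.sqrt (Kre (dotp x (RU *m x))).
Proof. by rewrite /normU dotUE. Qed.

Lemma normU_ge0 x : 0 <= normU RU x.
Proof. exact: sqrtr_ge0. Qed.

Lemma normU_gt0 x : x != 0 -> 0 < normU RU x.
Proof. by move/RU_spd.2/Kre_gt0; rewrite normUE sqrtr_gt0. Qed.

Lemma normU_sqr x : normU RU x ^+ 2 = Kre (dotU RU x x).
Proof. by rewrite normUE sqr_sqrtr ?spd_psd // dotUE. Qed.

Lemma Kabs_dotU_le x y : Kabs (dotU RU x y) <= normU RU x * normU RU y.
Proof.
by rewrite dotUE !normUE herm_CauchySchwarz //; [exact: RU_spd.1 | exact: spd_psd].
Qed.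

Lemma spd_unitmx : RU \in unitmx.
Proof.
rewrite -unitmx_tr -row_free_unit -kermx_eq0; apply/eqP/row_matrixP => i.
rewrite row0; apply/eqP; apply: contraT => nz.
set v := row i _ in nz.
have vRU : RU *m v^T = 0.
  by rewrite -[RU]trmxK -trmx_mul /v -row_mul mulmx_ker row0 trmx0.
have vT0 : v^T != 0 by rewrite -[0]trmx0 (inj_eq (@trmx_inj _ _ _)).
by have := RU_spd.2 _ vT0; rewrite vRU dotp0r ltxx.
Qed.

Lemma dualUE y : dualU RU y = normU RU (invmx RU *m y).
Proof. by rewrite /dualU /normU /dotU mulmxA mulmxV ?spd_unitmx // mul1mx. Qed.

Lemma dotp_dotU y w : dotp y w = dotU RU (invmx RU *m y) w.
Proof. by rewrite /dotU mulmxA mulmxV ?spd_unitmx // mul1mx. Qed.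

Lemma Kabs_dotp_le_dualU y w : Kabs (dotp y w) <= dualU RU y * normU RU w.
Proof. by rewrite dotp_dotU dualUE Kabs_dotU_le. Qed.

Lemma dualU_ge0 y : 0 <= dualU RU y.
Proof. exact: sqrtr_ge0. Qed.

Lemma dotpp_le_dotU :
  exists2 C, 0 <= C & forall x, Kre (dotp x x) <= C * Kre (dotU RU x x).
Proof.
have [F F0 hF] := dotpp_mulmx_bounded (invmx RU).
exists (Num.sqrt F); first exact: sqrtr_ge0.
move=> x; rewrite dotUE; set z := invmx RU *m x.
have xE : x = RU *m z by rewrite /z mulmxA mulmxV ?spd_unitmx // mul1mx.
have qz : Kre (dotp z (RU *m z)) <= Num.sqrt F * Kre (dotp x x).
  rewrite -xE; apply: le_trans (Kre_le_Kabs _) _; apply: le_trans (CauchySchwarz _ _) _.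
  rewrite -[X in _ <= _ * X]enorm_sqr expr2 mulrA ler_wpM2r ?enorm_ge0 //.
  by rewrite /enorm -sqrtrM // ler_wsqrtr ?hF.
(* with x = R_U z, the R_U-Cauchy-Schwarz inequality for (x, z) gives
   |x|^4 <= <x, R_U x> <z, R_U z> <= <x, R_U x> sqrt(F) |x|^2 *)
have hsq : Kre (dotp x x) ^+ 2 <= Kre (dotp x (RU *m x)) * (Num.sqrt F * Kre (dotp x x)).
  have xxz : Kre (dotp x x) ^+ 2 <= Kabs (dotp x (RU *m z)) ^+ 2.
    by rewrite lerXn2r ?nnegrE ?Kre_dotpp_ge0 ?Kabs_ge0 // -xE Kre_le_Kabs.
  apply: le_trans xxz _.
  apply: le_trans (herm_CauchySchwarz_sqr RU_spd.1 spd_psd x z) _.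
  by rewrite ler_wpM2l ?spd_psd.
have [x0|xn0] := eqVneq (Kre (dotp x x)) 0.
  by rewrite x0 mulr_ge0 ?sqrtr_ge0 ?spd_psd.
have xgt0 : 0 < Kre (dotp x x) by rewrite lt0r xn0 Kre_dotpp_ge0.
by rewrite -(ler_pM2r xgt0) -expr2 (le_trans hsq) // mulrA [_ * Num.sqrt F]mulrC.
Qed.

Lemma normU_mulmx_bounded (M : 'M[K]_n) :
  exists2 C, 0 <= C & forall x, normU RU (M *m x) <= C * normU RU x.
Proof.
have [D D0 hD] := Kre_dotp_mulmx_bounded RU.
have [F F0 hF] := dotpp_mulmx_bounded M.
have [C C0 hC] := dotpp_le_dotU.
exists (Num.sqrt (D * F * C)); first exact: sqrtr_ge0.
move=> x; rewrite !normUE -sqrtrM ?mulr_ge0 // ler_wsqrtr //.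
apply: le_trans (hD _) _; rewrite -!mulrA ler_wpM2l //.
by apply: le_trans (hF _) _; rewrite ler_wpM2l // -dotUE hC.
Qed.

Lemma dualU_mulmx_bounded (M : 'M[K]_n) :
  exists2 C, 0 <= C & forall x, dualU RU (M *m x) <= C * normU RU x.
Proof.
have [C C0 hC] := normU_mulmx_bounded (invmx RU *m M).
by exists C => // x; rewrite dualUE mulmxA hC.
Qed.

End UGeometry.

Section Extrema.
Variables (R : realType) (c : scalar_kind) (n : nat).
Implicit Types (S : set 'cV[Kfield R c]_n) (f : 'cV[Kfield R c]_n -> R).

Lemma maxr_le S f B :
  0 <= B -> (forall x, S x -> x != 0 -> f x <= B) -> maxr S f <= B.
Proof.
move=> B0 fB; rewrite /maxr.
have [[_ [x Sx _]]|/nonemptyPn ->] := pselect (f @` [set x | S x /\ x != 0] !=set0).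
  by apply: ge_sup; [exists (f x), x | move=> _ [z [Sz z0] <-]; exact: fB].
by rewrite sup0.
Qed.

Lemma maxr_ge0 S f : (forall x, S x -> x != 0 -> 0 <= f x) -> 0 <= maxr S f.
Proof.
move=> f0; rewrite /maxr.
have [hs|/sup_out ->//] := pselect (has_sup (f @` [set x | S x /\ x != 0])).
have [_ [x [Sx x0] _]] := hs.1.
by apply: le_trans (f0 _ Sx x0) _; apply: sup_upper_bound => //; exists x.
Qed.

Lemma le_maxr S f B x :
  (forall x, S x -> x != 0 -> f x <= B) -> S x -> x != 0 -> f x <= maxr S f.
Proof.
move=> fB Sx x0; apply: sup_upper_bound; last by exists x.
by split; [exists (f x), x | exists B => _ [z [Sz z0] <-]; exact: fB].
Qed.

Lemma minr_ge0 S f : (forall x, S x -> x != 0 -> 0 <= f x) -> 0 <= minr S f.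
Proof.
move=> f0; rewrite /minr.
have [[_ [x Sx _]]|/nonemptyPn ->] := pselect (f @` [set x | S x /\ x != 0] !=set0).
  by apply: lb_le_inf; [exists (f x), x | move=> _ [z [Sz z0] <-]; exact: f0].
by rewrite inf0.
Qed.

Lemma minr_le S f x :
  (forall x, S x -> x != 0 -> 0 <= f x) -> S x -> x != 0 -> minr S f <= f x.
Proof.
move=> f0 Sx x0; apply: ge_inf; last by exists x.
by exists 0 => _ [z [Sz z0] <-]; exact: f0.
Qed.

Lemma le_minr S f B x :
  S x -> x != 0 -> (forall x, S x -> x != 0 -> B <= f x) -> B <= minr S f.
Proof.
move=> Sx x0 Bf; apply: lb_le_inf; first by exists (f x), x.
by move=> _ [z [Sz z0] <-]; exact: Bf.
Qed.

Lemma minr_neq0_nonzero S f : minr S f != 0 -> exists x, S x /\ x != 0.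
Proof.
move=> minr_neq0; apply: contrapT => noS; move: minr_neq0; rewrite /minr.
suff -> : [set f x | x in [set x | S x /\ x != 0]] = set0 by rewrite inf0 eqxx.
by apply/seteqP; split => // y [x Sx _]; apply: noS; exists x.
Qed.

End Extrema.

Section ReducedSpaces.
Variables (R : realType) (c : scalar_kind) (n : nat).
Local Notation K := (Kfield R c).
Variables (RU A : 'M[K]_n) (b u : 'cV[K]_n) (Ur : {vspace 'cV[K]_n}).

Lemma sspan0 (S : set 'cV[K]_n) : sspan S 0.
Proof. by exists [::], [::]; rewrite big_ord0. Qed.

Lemma sspan_set1 v : sspan [set u] v -> exists a : K, v = a *: u.
Proof.
move=> [s [a [su ->]]]; exists (\sum_(i < size s) a`_i); rewrite scaler_suml.
by apply: eq_bigr => i _; rewrite (su s`_i) ?mem_nth.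
Qed.

Lemma vsset_sub_Y_r : vsset Ur `<=` Y_r RU Ur A b.
Proof. by move=> w Urw; exists w => //; exists 0; [exact: sspan0 | exact: addr0]. Qed.

Lemma vsset_sub_sumset : vsset Ur `<=` sumset (sspan [set u]) (vsset Ur).
Proof. by move=> x Urx; exists 0; [exact: sspan0 | exists x => //; rewrite add0r]. Qed.

Lemma invmx_mulmx_Y_r x : A *m u = b ->
  sumset (sspan [set u]) (vsset Ur) x -> Y_r RU Ur A b (invmx RU *m (A *m x)).
Proof.
move=> Aub [_ /sspan_set1[a ->] [xr Urxr <-]].
exists 0; first by rewrite /vsset /= mem0v.
exists (invmx RU *m (A *m (a *: u + xr))); last by rewrite add0r.
(* R_U^-1 A (a u + xr) = (a + 1) R_U^-1 (b - A 0) - R_U^-1 (b - A xr) *)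
exists [:: invmx RU *m (b - A *m 0); invmx RU *m (b - A *m xr)], [:: a + 1; -1]; split.
  move=> y; rewrite !inE => /orP[] /eqP ->; last by exists xr.
  by exists 0 => //; rewrite /vsset /= mem0v.
rewrite /= big_ord_recl big_ord_recl big_ord0 /= addr0.
rewrite mulmx0 subr0 !mulmxDr -!scalemxAr Aub.
by rewrite mulmxN scalerDl scale1r scaleN1r opprD opprK addrA addrK.
Qed.

End ReducedSpaces.

Section DualNorms.
Variables (R : realType) (c : scalar_kind) (n : nat).
Local Notation K := (Kfield R c).
Local Notation Kabs := (@Kabs R c).
Variables (RU : 'M[K]_n) (Ur : {vspace 'cV[K]_n}).
Hypothesis RU_spd : spd RU.
Implicit Types y w : 'cV[K]_n.

Lemma dual_ratio_ge0 y w : 0 <= Kabs (dotp y w) / normU RU w.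
Proof. by rewrite divr_ge0 ?Kabs_ge0 ?normU_ge0. Qed.

Lemma dual_ratio_le_dualU y w : w != 0 -> Kabs (dotp y w) / normU RU w <= dualU RU y.
Proof.
by move=> w0; rewrite ler_pdivrMr ?(normU_gt0 RU_spd) ?(Kabs_dotp_le_dualU RU_spd).
Qed.

Lemma dual_ratio_le_dualUr y w : vsset Ur w -> w != 0 ->
  Kabs (dotp y w) / normU RU w <= dualUr RU Ur y.
Proof. by move=> Urw w0; apply: le_maxr Urw w0 => v _; exact: dual_ratio_le_dualU. Qed.

Lemma dualUr_ge0 y : 0 <= dualUr RU Ur y.
Proof. by apply: maxr_ge0 => w _ _; exact: dual_ratio_ge0. Qed.

Lemma dualUr_le_dualU y : dualUr RU Ur y <= dualU RU y.
Proof. by apply: maxr_le; [exact: dualU_ge0 | move=> w _; exact: dual_ratio_le_dualU]. Qed.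

End DualNorms.

Section Embedding.
Variables (R : realType) (c : scalar_kind) (n k : nat).
Local Notation K := (Kfield R c).
Local Notation Kabs := (@Kabs R c).
Variables (RU : 'M[K]_n) (Theta : 'M[K]_(k, n)).

Definition eps_embedding (S : set 'cV[K]_n) (eps : R) :=
  forall x y, S x -> S y ->
    Kabs (dotU RU x y - dotp (Theta *m x) (Theta *m y)) <= eps * normU RU x * normU RU y.

Variables (S : set 'cV[K]_n) (eps : R) (Ur : {vspace 'cV[K]_n}).
Hypothesis RU_spd : spd RU.
Hypothesis eps_ge0 : 0 <= eps.
Hypothesis eps_lt1 : eps < 1.
Hypothesis Theta_emb : eps_embedding S eps.
Hypothesis Ur_sub : vsset Ur `<=` S.
Implicit Types x y w : 'cV[K]_n.

Lemma sqr_enorm_sketch_err x : S x ->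
  `|enorm (Theta *m x) ^+ 2 - normU RU x ^+ 2| <= eps * normU RU x ^+ 2.
Proof.
move=> Sx; have := Theta_emb Sx Sx; rewrite -mulrA -expr2; apply: le_trans.
rewrite enorm_sqr (normU_sqr RU_spd) -raddfB /= -normrN -raddfN /= opprB.
exact: normr_Kre_le_Kabs.
Qed.

Lemma enorm_sketch_ge x : S x -> Num.sqrt (1 - eps) * normU RU x <= enorm (Theta *m x).
Proof.
move=> Sx; rewrite -(@ler_pXn2r _ 2) ?nnegrE ?mulr_ge0 ?sqrtr_ge0 ?normU_ge0 ?enorm_ge0 //.
rewrite exprMn sqr_sqrtr ?subr_ge0 ?(ltW eps_lt1) // mulrBl mul1r.
by have := sqr_enorm_sketch_err Sx; rewrite ler_norml => /andP[? _]; lra.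
Qed.

Lemma enorm_sketch_le x : S x -> enorm (Theta *m x) <= Num.sqrt (1 + eps) * normU RU x.
Proof.
move=> Sx; rewrite -(@ler_pXn2r _ 2) ?nnegrE ?mulr_ge0 ?sqrtr_ge0 ?normU_ge0 ?enorm_ge0 //.
rewrite exprMn [Num.sqrt (1 + eps) ^+ 2]sqr_sqrtr ?addr_ge0 // mulrDl mul1r.
by have := sqr_enorm_sketch_err Sx; rewrite ler_norml => /andP[_ ?]; lra.
Qed.

Lemma enorm_sketch_gt0 x : S x -> x != 0 -> 0 < enorm (Theta *m x).
Proof.
move=> Sx x0; apply: lt_le_trans (enorm_sketch_ge Sx).
by rewrite mulr_gt0 ?(normU_gt0 RU_spd) // sqrtr_gt0 subr_gt0.
Qed.

Lemma dotp_sketch_err y w : S (invmx RU *m y) -> S w ->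
  Kabs (dotp y w - dotp (Theta *m (invmx RU *m y)) (Theta *m w))
  <= eps * dualU RU y * normU RU w.
Proof. by move=> Sy Sw; rewrite (dotp_dotU RU_spd) (dualUE RU_spd) Theta_emb. Qed.

Lemma sketch_ratio_le y w : S (invmx RU *m y) -> vsset Ur w -> w != 0 ->
  Kabs (dotp (Theta *m (invmx RU *m y)) (Theta *m w)) / enorm (Theta *m w)
  <= (Kabs (dotp y w) / normU RU w + eps * dualU RU y) / Num.sqrt (1 - eps).
Proof.
move=> Sy Urw w0; have Sw := Ur_sub Urw.
have Nw := normU_gt0 RU_spd w0.
have sm : 0 < Num.sqrt (1 - eps) by rewrite sqrtr_gt0 subr_gt0.
have -> : (Kabs (dotp y w) / normU RU w + eps * dualU RU y) / Num.sqrt (1 - eps)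
        = (Kabs (dotp y w) + eps * dualU RU y * normU RU w)
          / (Num.sqrt (1 - eps) * normU RU w).
  by field; rewrite !gt_eqF.
apply: le_trans (_ : _ <= _ / (Num.sqrt (1 - eps) * normU RU w)) _.
  apply: ler_wpM2l; first exact: Kabs_ge0.
  by rewrite lef_pV2 ?posrE ?mulr_gt0 ?enorm_sketch_gt0 ?enorm_sketch_ge.
apply: ler_wpM2r; first by rewrite invr_ge0 mulr_ge0 ?normU_ge0 ?sqrtr_ge0.
by rewrite (le_trans (ler_KabsB _ (dotp y w))) // lerD2l -KabsN opprB dotp_sketch_err.
Qed.

Lemma dual_ratio_le_sketch y w : S (invmx RU *m y) -> vsset Ur w -> w != 0 ->
  Kabs (dotp y w) / normU RU w
  <= Num.sqrt (1 + eps)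
       * (Kabs (dotp (Theta *m (invmx RU *m y)) (Theta *m w)) / enorm (Theta *m w))
     + eps * dualU RU y.
Proof.
move=> Sy Urw w0; have Sw := Ur_sub Urw.
have Nw := normU_gt0 RU_spd w0; have Tw := enorm_sketch_gt0 Sw w0.
set p := Kabs (dotp (Theta *m _) _).
have qp : Kabs (dotp y w) <= p + eps * dualU RU y * normU RU w.
  apply: le_trans (ler_KabsB _ (dotp (Theta *m (invmx RU *m y)) (Theta *m w))) _.
  by rewrite lerD2l dotp_sketch_err.
have pT : p <= Num.sqrt (1 + eps) * (p / enorm (Theta *m w)) * normU RU w.
  have -> : Num.sqrt (1 + eps) * (p / enorm (Theta *m w)) * normU RU w
            = p / enorm (Theta *m w) * (Num.sqrt (1 + eps) * normU RU w) by ring.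
  rewrite -{1}(divfK (lt0r_neq0 Tw) p); apply: ler_wpM2l; last exact: enorm_sketch_le.
  by rewrite divr_ge0 ?Kabs_ge0 ?enorm_ge0.
by rewrite ler_pdivrMr // mulrDl (le_trans qp) // lerD2r.
Qed.

Lemma sketch_ratio_ge0 y w :
  0 <= Kabs (dotp (Theta *m (invmx RU *m y)) (Theta *m w)) / enorm (Theta *m w).
Proof. by rewrite divr_ge0 ?Kabs_ge0 ?enorm_ge0. Qed.

Lemma dualUrTh_ge0 y : 0 <= dualUrTh RU Ur Theta y.
Proof. by apply: maxr_ge0 => w _ _; exact: sketch_ratio_ge0. Qed.

Lemma sketch_ratio_le_dualUrTh y w : S (invmx RU *m y) -> vsset Ur w -> w != 0 ->
  Kabs (dotp (Theta *m (invmx RU *m y)) (Theta *m w)) / enorm (Theta *m w)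
  <= dualUrTh RU Ur Theta y.
Proof.
move=> Sy Urw w0.
apply: (le_maxr (B := (dualU RU y + eps * dualU RU y) / Num.sqrt (1 - eps))) Urw w0.
move=> v Urv v0.
apply: le_trans (sketch_ratio_le Sy Urv v0) _.
apply: ler_wpM2r; first by rewrite invr_ge0 sqrtr_ge0.
by rewrite lerD2r dual_ratio_le_dualU.
Qed.

Lemma dualUrTh_le y : S (invmx RU *m y) ->
  dualUrTh RU Ur Theta y <= (dualUr RU Ur y + eps * dualU RU y) / Num.sqrt (1 - eps).
Proof.
move=> Sy; apply: maxr_le.
  by rewrite divr_ge0 ?addr_ge0 ?mulr_ge0 ?dualU_ge0 ?dualUr_ge0 ?sqrtr_ge0.
move=> w Urw w0; apply: le_trans (sketch_ratio_le Sy Urw w0) _.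
apply: ler_wpM2r; first by rewrite invr_ge0 sqrtr_ge0.
by rewrite lerD2r dual_ratio_le_dualUr.
Qed.

Lemma dualUr_le_dualUrTh y : S (invmx RU *m y) ->
  dualUr RU Ur y <= Num.sqrt (1 + eps) * dualUrTh RU Ur Theta y + eps * dualU RU y.
Proof.
move=> Sy; apply: maxr_le.
  by rewrite addr_ge0 ?mulr_ge0 ?dualU_ge0 ?dualUrTh_ge0 ?sqrtr_ge0.
move=> w Urw w0; apply: le_trans (dual_ratio_le_sketch Sy Urw w0) _.
by rewrite lerD2r; apply: ler_wpM2l; rewrite ?sqrtr_ge0 ?sketch_ratio_le_dualUrTh.
Qed.

End Embedding.

Section StabilityConstants.
Variables (R : realType) (c : scalar_kind) (n : nat).
Local Notation K := (Kfield R c).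
Variables (RU A : 'M[K]_n) (u : 'cV[K]_n) (Ur : {vspace 'cV[K]_n}).
Hypothesis RU_spd : spd RU.
Implicit Types x : 'cV[K]_n.

Let dualUr_ratio_ge0 x : 0 <= dualUr RU Ur (A *m x) / normU RU x.
Proof. by rewrite divr_ge0 ?dualUr_ge0 ?normU_ge0. Qed.

Lemma alpha_r_ge0 : 0 <= alpha_r RU Ur A.
Proof. by apply: minr_ge0 => x _ _; exact: dualUr_ratio_ge0. Qed.

Lemma alpha_r_mulr_le x : vsset Ur x -> x != 0 ->
  alpha_r RU Ur A * normU RU x <= dualUr RU Ur (A *m x).
Proof.
move=> Urx x0; rewrite -ler_pdivlMr ?(normU_gt0 RU_spd) //.
by apply: minr_le Urx x0 => w _ _; exact: dualUr_ratio_ge0.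
Qed.

Lemma dualU_le_a_r x : 0 < alpha_r RU Ur A -> vsset Ur x -> x != 0 ->
  dualU RU (A *m x) <= a_r RU Ur A * dualUr RU Ur (A *m x).
Proof.
move=> al_gt0 Urx x0.
have dualUr_gt0 w : vsset Ur w -> w != 0 -> 0 < dualUr RU Ur (A *m w).
  move=> Urw w0; apply: lt_le_trans (alpha_r_mulr_le Urw w0).
  by rewrite mulr_gt0 ?(normU_gt0 RU_spd).
have [C C0 AC] := dualU_mulmx_bounded RU_spd A.
rewrite -ler_pdivrMr ?dualUr_gt0 //.
(* a_r is finite: dualU (A w) <= C ||w||_U <= (C / alpha_r) dualUr (A w) *)
apply: (le_maxr (B := C / alpha_r RU Ur A)) Urx x0 => w Urw w0.
rewrite ler_pdivrMr ?dualUr_gt0 // (le_trans (AC w)) // mulrAC -mulrA.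
by apply: ler_wpM2l => //; rewrite ler_pdivlMr // mulrC alpha_r_mulr_le.
Qed.

Lemma beta_r_ge0 : 0 <= beta_r RU Ur A u.
Proof. by apply: maxr_ge0 => x _ _; exact: dualUr_ratio_ge0. Qed.

Lemma dualUr_ratio_le_beta_r x : sumset (sspan [set u]) (vsset Ur) x -> x != 0 ->
  dualUr RU Ur (A *m x) / normU RU x <= beta_r RU Ur A u.
Proof.
have [C C0 AC] := dualU_mulmx_bounded RU_spd A.
move=> Sx x0; apply: (le_maxr (B := C)) Sx x0 => z _ z0.
by rewrite ler_pdivrMr ?(normU_gt0 RU_spd) // (le_trans (dualUr_le_dualU _ _ _)).
Qed.

Lemma beta_ge0 : 0 <= beta RU A.
Proof. by apply: maxr_ge0 => x _ _; rewrite divr_ge0 ?dualU_ge0 ?normU_ge0. Qed.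

Lemma dualU_ratio_le_beta x : x != 0 -> dualU RU (A *m x) / normU RU x <= beta RU A.
Proof.
have [C C0 AC] := dualU_mulmx_bounded RU_spd A.
move=> x0; apply: (le_maxr (B := C)) I x0 => z _ z0.
by rewrite ler_pdivrMr ?(normU_gt0 RU_spd).
Qed.

End StabilityConstants.

Section Proposition.
Variables (R : realType) (c : scalar_kind) (n k : nat).
Local Notation K := (Kfield R c).
Variables (RU A : 'M[K]_n) (b u : 'cV[K]_n) (Ur : {vspace 'cV[K]_n}).
Variables (Theta : 'M[K]_(k, n)) (eps : R).
Hypothesis RU_spd : spd RU.
Hypothesis Aub : A *m u = b.
Hypothesis eps_ge0 : 0 <= eps.
Hypothesis eps_lt1 : eps < 1.
Hypothesis Theta_emb : eps_embedding RU Theta (Y_r RU Ur A b) eps.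

Let Ur_sub_Y_r : vsset Ur `<=` Y_r RU Ur A b.
Proof. exact: vsset_sub_Y_r. Qed.

Lemma alpha_rTh_ge :
  (Num.sqrt (1 + eps))^-1 * (1 - eps * a_r RU Ur A) * alpha_r RU Ur A
  <= alpha_rTh RU Ur Theta A.
Proof.
set al := alpha_r RU Ur A; set C := _ * (1 - _).
have alTh_ge0 : 0 <= alpha_rTh RU Ur Theta A.
  by apply: minr_ge0 => x _ _; rewrite divr_ge0 ?dualUrTh_ge0 ?normU_ge0.
have [/le_trans->//|Cal_gt0] := leP (C * al) 0.
have al_gt0 : 0 < al.
  by rewrite lt0r alpha_r_ge0 andbT; apply: contraTneq Cal_gt0 => ->; rewrite mulr0 ltxx.
have C_gt0 : 0 < C by rewrite -(pmulr_lgt0 _ al_gt0).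
have [x0 [Urx0 x0_neq0]] := minr_neq0_nonzero (lt0r_neq0 al_gt0).
apply: (le_minr Urx0 x0_neq0) => x Urx x_neq0.
have Yx := invmx_mulmx_Y_r RU Aub (vsset_sub_sumset u Urx).
rewrite ler_pdivlMr ?(normU_gt0 RU_spd) // -mulrA.
apply: le_trans (ler_wpM2l (ltW C_gt0) (alpha_r_mulr_le A RU_spd Urx x_neq0)) _.
rewrite /C -mulrA ler_pdivrMl ?sqrtr_gt0 ?ltr_wpDr //.
have := dualUr_le_dualUrTh RU_spd eps_ge0 eps_lt1 Theta_emb Ur_sub_Y_r Yx.
have := ler_wpM2l eps_ge0 (dualU_le_a_r RU_spd al_gt0 Urx x_neq0).
rewrite mulrBl mul1r mulrA; lra.
Qed.

Lemma beta_rTh_le :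
  beta_rTh RU Ur Theta A u
  <= (Num.sqrt (1 - eps))^-1 * (beta_r RU Ur A u + eps * beta RU A).
Proof.
have sm_gt0 : 0 < Num.sqrt (1 - eps) by rewrite sqrtr_gt0 subr_gt0.
apply: maxr_le.
  by rewrite mulr_ge0 ?invr_ge0 ?sqrtr_ge0 ?addr_ge0 ?mulr_ge0 ?beta_r_ge0 ?beta_ge0.
move=> x Sx x_neq0; have Nx := normU_gt0 RU_spd x_neq0.
have Yx := invmx_mulmx_Y_r RU Aub Sx.
rewrite ler_pdivrMr //.
apply: le_trans (dualUrTh_le RU_spd eps_ge0 eps_lt1 Theta_emb Ur_sub_Y_r Yx) _.
rewrite mulrC -mulrA; apply: ler_wpM2l; first by rewrite invr_ge0 ltW.
rewrite mulrDl -mulrA.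
apply: lerD; first by rewrite -ler_pdivrMr ?dualUr_ratio_le_beta_r.
by apply: ler_wpM2l => //; rewrite -ler_pdivrMr ?dualU_ratio_le_beta.
Qed.

End Proposition.

Theorem proposition4p2 (R : realType) (c : scalar_kind) (n k : nat)
  (RU : 'M[Kfield R c]_n) (A : 'M[Kfield R c]_n) (b u : 'cV[Kfield R c]_n)
  (Ur : {vspace 'cV[Kfield R c]_n}) (Theta : 'M[Kfield R c]_(k, n)) (eps : R) :
  spd RU ->
  A *m u = b ->
  0 <= eps < 1 ->
  (forall x y, Y_r RU Ur A b x -> Y_r RU Ur A b y ->
     Kabs (dotU RU x y - dotp (Theta *m x) (Theta *m y))
       <= eps * normU RU x * normU RU y) ->
  alpha_rTh RU Ur Theta A
    >= (Num.sqrt (1 + eps))^-1 * (1 - eps * a_r RU Ur A) * alpha_r RU Ur A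
  /\ beta_rTh RU Ur Theta A u
    <= (Num.sqrt (1 - eps))^-1 * (beta_r RU Ur A u + eps * beta RU A).
Proof.
move=> RU_spd Aub /andP[eps_ge0 eps_lt1] Theta_emb.
split; first exact: alpha_rTh_ge RU_spd Aub eps_ge0 eps_lt1 Theta_emb.
exact: beta_rTh_le RU_spd Aub eps_ge0 eps_lt1 Theta_emb.
Qed.
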